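(* Let $H=\Bbbk^G\#\Bbbk F$ be as in the context with $G$ abelian, and assume the action of $F$ on $G$ is trivial: $g\triangleleft f=g$ for all $g\in G$, $f\in F$. Fix $f\in F$, let $V=\Bbbk v$ be a simple right $\Bbbk^{G_f}$-comodule with $\rho(v)=v\otimes\sum_{g\in G_f}a^gp_g$, and $\tilde V=(V\otimes\Bbbk f)\Box_{H'_f}H$ the induced right $H$-comodule. Let $V^*=\Bbbk v^*$ be the dual right $\Bbbk^{G_f}$-comodule, $\rho(v^* )=v^*\otimes\sum_{g\in G_f}a^gp_{g^{-1}}$. Then $G_{f^{-1}}=G_f$ and $\tilde V^*\cong(V^*\otimes\Bbbk f^{-1})\Box_{H'_{f^{-1}}}H$. Moreover, $\tilde V\cong\tilde V^*$ if and only if $V\cong V^*$ and $G_{f,f^{-1}}=\{g\in G\mid g\triangleright f=f^{-1}\}\neq\emptyset$.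
   Context: Setting: $\Bbbk$ algebraically closed of characteristic $0$, $F$ a group (possibly infinite), $G$ a finite abelian group, $(F,G,\triangleleft,\triangleright)$ a matched pair ($\triangleright:G\times F\to F$ a left action of $G$ on the set $F$, $\triangleleft:G\times F\to G$ a right action of $F$ on the set $G$, with $g\triangleright(ff')=(g\triangleright f)((g\triangleleft f)\triangleright f')$ and $(gg')\triangleleft f=(g\triangleleft(g'\triangleright f))(g'\triangleleft f)$). $H=\Bbbk^G\#\Bbbk F$ is the Hopf algebra with basis $\{p_g\#f\}$, product $(p_g\#f)(p_{g'}\#f')=\delta_{g\triangleleft f,g'}p_g\#ff'$, unit $\sum_gp_g\#1_F$, coproduct $\Delta(p_g\#f)=\sum_{x\in G}p_{gx^{-1}}\#(x\triangleright f)\otimes p_x\#f$, counit $\varepsilon(p_g\#f)=\delta_{g,1_G}$, antipode $S(p_g\#f)=p_{(g\triangleleft f)^{-1}}\#(g\triangleright f)^{-1}$. For $e\in F$: $G_e=\{g\in G\mid g\triangleright e=e\}$; $H'_e$ is the coalgebra with basis $\{p_g\#f'\mid g\in G_e,f'\in F\}$, $\Delta(p_g\#f')=\sum_{x\in G_e}p_{gx^{-1}}\#(x\triangleright f')\otimes p_x\#f'$, $\varepsilon(p_g\#f')=\delta_{g,1_G}$; $H$ is a left $H'_e$-comodule via $(\pi_e\otimes\mathrm{id})\Delta$ ($\pi_e$ kills $p_g\#f'$, $g\notin G_e$). For a right $\Bbbk^{G_e}$-comodule $U$ with $\rho(u)=\sum_{g\in G_e}u_g\otimes p_g$, $U\otimes\Bbbk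 e$ is a right $H'_e$-comodule via $u\otimes e\mapsto\sum_gu_g\otimes e\otimes p_g\#e$, and $(U\otimes\Bbbk e)\Box_{H'_e}H$ (cotensor product) is the induced right $H$-comodule with coaction $\mathrm{id}\otimes\Delta$. $\tilde V^*$ is the dual right $H$-comodule. *)

From HB Require Import structures.
From mathcomp Require Import all_boot all_order all_algebra all_fingroup.
From mathcomp Require Import boolp classical_sets functions.
From Stdlib Require Import ClassicalEpsilon.

Set Implicit Arguments.
Unset Strict Implicit.
Unset Printing Implicit Defensive.

Import GRing.Theory.
Local Open Scope ring_scope.

(* An element of W (x) C is represented by a finite formal sum               *)
(*    sum_i w_i (x) b_i     as a list  [:: (w_1, b_1); ... ; (w_n, b_n)].     *)
(* Two such lists denote the same tensor iff all their coefficients along    *)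
(* the basis B agree (teq).  A coalgebra is given by Delta and epsilon on    *)
(* its basis: Delta b = sum_j c_j b1_j (x) b2_j  (a list of (c_j,(b1_j,b2_j))).*)
(* A comodule lives on a subspace S of an ambient k-vector space W.          *)

Definition tcoef (k : fieldType) (W : lmodType k) (B : eqType)
  (t : seq (W * B)) (b : B) : W := \sum_(x <- t | x.2 == b) x.1.

Definition teq (k : fieldType) (W : lmodType k) (B : eqType)
  (t1 t2 : seq (W * B)) : Prop := forall b, tcoef t1 b = tcoef t2 b.

Definition tnorm (k : fieldType) (W : lmodType k) (B : eqType)
  (t : seq (W * B)) : seq (W * B) :=
  [seq (tcoef t b, b) | b <- undup (map snd t)].

(* (rho (x) id) : W (x) C' -> W (x) C (x) C' *)
Definition rho_id (k : fieldType) (W : lmodType k) (B B' : eqType)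
  (rho : W -> seq (W * B)) (t : seq (W * B')) : seq (W * (B * B')) :=
  flatten [seq [seq (y.1, (y.2, x.2)) | y <- tnorm (rho x.1)] | x <- tnorm t].

(* (id (x) delta) : W (x) C -> W (x) C1 (x) C2, delta given on the basis *)
Definition id_delta (k : fieldType) (W : lmodType k) (B B1 B2 : eqType)
  (delta : B -> seq (k * (B1 * B2))) (t : seq (W * B)) : seq (W * (B1 * B2)) :=
  flatten [seq [seq (c.1 *: x.1, c.2) | c <- delta x.2] | x <- t].

Definition subspace (k : fieldType) (W : lmodType k) (S : W -> Prop) : Prop :=
  S 0 /\ forall (a : k) u v, S u -> S v -> S (a *: u + v).

Definition is_rcomod (k : fieldType) (W : lmodType k) (B : eqType)
  (delta : B -> seq (k * (B * B))) (eps : B -> k)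
  (S : W -> Prop) (rho : W -> seq (W * B)) : Prop :=
  [/\ subspace S,
      (forall w b, S w -> S (tcoef (rho w) b)),
      (forall (a : k) u v, S u -> S v ->
          teq (rho (a *: u + v)) ([seq (a *: x.1, x.2) | x <- rho u] ++ rho v)),
      (forall w, S w -> teq (rho_id rho (rho w)) (id_delta delta (rho w))) &
      (forall w, S w -> \sum_(x <- rho w) eps x.2 *: x.1 = w)].

Definition rcomod_iso (k : fieldType) (W1 W2 : lmodType k) (B : eqType)
  (S1 : W1 -> Prop) (rho1 : W1 -> seq (W1 * B))
  (S2 : W2 -> Prop) (rho2 : W2 -> seq (W2 * B)) : Prop :=
  exists phi : W1 -> W2,
    [/\ (forall (a : k) u v, S1 u -> S1 v -> phi (a *: u + v) = a *: phi u + phi v),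
        (forall u, S1 u -> S2 (phi u)),
        (forall u v, S1 u -> S1 v -> phi u = phi v -> u = v),
        (forall w, S2 w -> exists2 u, S1 u & phi u = w) &
        (forall u, S1 u ->
            teq [seq (phi x.1, x.2) | x <- tnorm (rho1 u)] (rho2 (phi u)))].

(* The dual space S^* of a subspace S of W, realised canonically inside the *)
(* function space W -> k: linear forms on S, extended by 0 outside S.        *)
Definition dual_space (k : fieldType) (W : lmodType k) (S : W -> Prop)
  (phi : W -> k^o) : Prop :=
  (forall (a : k) u v, S u -> S v -> phi (a *: u + v) = a * phi u + phi v)
  /\ (forall w, ~ S w -> phi w = 0).

(* rhod is the coaction of the dual right comodule of (S, rho), for the      *)
(* antipode antip (given on the basis): phi_(0)(w) phi_(1) = phi(w_(0)) S(w_(1)) *)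
Definition is_dual_coact (k : fieldType) (W : lmodType k) (B : eqType)
  (antip : B -> seq (k * B)) (S : W -> Prop) (rho : W -> seq (W * B))
  (rhod : (W -> k^o) -> seq ((W -> k^o) * B)) : Prop :=
  forall phi, dual_space S phi ->
    (forall b, dual_space S (tcoef (rhod phi) b)) /\
    (forall w, S w ->
       teq [seq ((x.1 w : k^o), x.2) | x <- rhod phi]
           (flatten [seq [seq ((c.1 * phi x.1 : k^o), c.2) | c <- antip x.2]
                    | x <- tnorm (rho w)])).

(* tr g f  stands for  g |> f   and   tl g f  stands for  g <| f.            *)
(* The basis element p_g # f of H is the pair (g, f) : G * F.                *)

Definition matched_pair (F : groupType) (G : finGroupType)
  (tr : G -> F -> F) (tl : G -> F -> G) : Prop :=
  [/\
      (forall f, tr 1%g f = f),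
      (forall g g' f, tr (g * g')%g f = tr g (tr g' f)),
      (forall g, tl g 1%g = g) &
      (forall g f f', tl g (f * f')%g = tl (tl g f) f')]
  /\
  (forall g f f', tr g (f * f')%g = (tr g f * tr (tl g f) f')%g)
  /\ (forall g g' f, tl (g * g')%g f = (tl g (tr g' f) * tl g' f)%g).

Definition stab (F : groupType) (G : finGroupType) (tr : G -> F -> F) (e : F)
  : {set G} := [set g | tr g e == e].

Definition deltaH (k : fieldType) (F : groupType) (G : finGroupType)
  (tr : G -> F -> F) (b : G * F) : seq (k * ((G * F) * (G * F))) :=
  [seq (1, ((b.1 * x^-1, tr x b.2)%g, (x, b.2))) | x <- enum G].

Definition epsH (k : fieldType) (F : groupType) (G : finGroupType)
  (b : G * F) : k := (b.1 == 1%g)%:R.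

Definition antipH (k : fieldType) (F : groupType) (G : finGroupType)
  (tr : G -> F -> F) (tl : G -> F -> G) (b : G * F) : seq (k * (G * F)) :=
  [:: (1, ((tl b.1 b.2)^-1, (tr b.1 b.2)^-1)%g)].

(* the left H'_e-coaction (pi_e (x) id) Delta on H, on the basis *)
Definition lambdaH (k : fieldType) (F : groupType) (G : finGroupType)
  (tr : G -> F -> F) (e : F) (b : G * F) : seq (k * ((G * F) * (G * F))) :=
  [seq c <- deltaH k tr b | c.2.1.1 \in stab tr e].

Definition deltaK (k : fieldType) (F : groupType) (G : finGroupType)
  (tr : G -> F -> F) (e : F) (g : G) : seq (k * (G * G)) :=
  [seq (1, ((g * x^-1)%g, x)) | x <- enum (stab tr e)].

Definition epsK (k : fieldType) (G : finGroupType) (g : G) : k :=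
  (g == 1%g)%:R.

(* U (x) k e as a right H'_e-comodule: u(x)e |-> sum_g u_g (x) e (x) p_g#e.  *)
(* (U (x) ke is identified with U, the factor ke being one-dimensional.)     *)
Definition rho_tens_e (k : fieldType) (F : groupType) (G : finGroupType)
  (U : lmodType k) (rhoU : U -> seq (U * G)) (e : F) (u : U)
  : seq (U * (G * F)) :=
  [seq (y.1, (y.2, e)) | y <- tnorm (rhoU u)].

(* Elements of (U (x) ke) (x) H = U (x) H: finitely supported functions G*F -> U *)
Definition fin_supp (k : fieldType) (U : lmodType k) (X : eqType)
  (t : X -> U) : Prop := exists s : seq X, forall x, t x != 0 -> x \in s.

Definition fsupp (k : fieldType) (U : lmodType k) (X : eqType)
  (t : X -> U) : seq X :=
  epsilon (inhabits [::]) (fun s => uniq s /\ forall x, t x != 0 -> x \in s).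

Definition frep (k : fieldType) (U : lmodType k) (X : eqType)
  (t : X -> U) : seq (U * X) := [seq (t x, x) | x <- fsupp t].

Definition cotensor_space (k : fieldType) (F : groupType) (G : finGroupType)
  (tr : G -> F -> F) (U : lmodType k) (rhoU : U -> seq (U * G)) (e : F)
  (t : (G * F) -> U) : Prop :=
  fin_supp t /\
  teq (rho_id (rho_tens_e rhoU e) (frep t)) (id_delta (lambdaH k tr e) (frep t)).

Definition dfun (k : fieldType) (U : lmodType k) (X : eqType) (b : X) (u : U)
  : X -> U := fun b' => if b' == b then u else 0.

Definition ind_coact (k : fieldType) (F : groupType) (G : finGroupType)
  (tr : G -> F -> F) (U : lmodType k) (t : (G * F) -> U)
  : seq (((G * F) -> U) * (G * F)) :=
  flatten [seq [seq (dfun c.2.1 (c.1 *: x.1), c.2.2) | c <- deltaH k tr x.2]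
          | x <- frep t].

(* V = k v with rho(v) = v (x) sum_(g in G_f) a^g p_g  (V identified with k, v = 1) *)
Definition rhoV (k : fieldType) (F : groupType) (G : finGroupType)
  (tr : G -> F -> F) (f : F) (a : G -> k) (c : k^o) : seq (k^o * G) :=
  [seq ((c * a g : k^o), g) | g <- enum (stab tr f)].

Definition rhoVd (k : fieldType) (F : groupType) (G : finGroupType)
  (tr : G -> F -> F) (f : F) (a : G -> k) (c : k^o) : seq (k^o * G) :=
  [seq ((c * a g : k^o), (g^-1)%g) | g <- enum (stab tr f)].

From HB Require Import structures.
From mathcomp Require Import all_boot all_order all_algebra all_fingroup.
From mathcomp Require Import boolp classical_sets functions.
From Stdlib Require Import ClassicalEpsilon.

(** Since [F] acts trivially on [G], the cotensor product [(V ⊗ kf) □ H] is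
    the space of functions [t] on [G × F] vanishing off [{(x, e) | x ▷ e = f}]
    with [t (g x, e) = a(g) t (x, e)] for [g ∈ G_f], and the coefficients of
    its coaction are right translations.  Averaging over [G_f] (possible in
    characteristic 0) shows that it is spanned by the vectors
    [E_x = Σ_(g ∈ G_f) a(g) v ⊗ p_(g x) # (x⁻¹ ▷ f)], subject only to
    [E_(h x) = a(h⁻¹) E_x] for [h ∈ G_f].  A linear form [φ] is therefore
    determined by the values [φ(E_x)], and [φ ↦ ((x, x⁻¹ ▷ f⁻¹) ↦ φ(E_x))]
    identifies the dual with the comodule induced from [V^*] at [f⁻¹].

    An isomorphism between the two induced comodules carries [E_1], on which
    translation by [(h, f)] acts by [a(h)], to a nonzero vector fixed by
    translation by [(1, f)].  Such a vector is supported on the fibre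
    [{x ▷ f = f⁻¹}], which is therefore nonempty, and translation by [(h, f)]
    acts on it by [a(h⁻¹)]; hence [a(h) = a(h⁻¹)], that is [V ≅ V^*].
    Conversely, if [g ▷ f = f⁻¹] and [a(h) = a(h⁻¹)] on [G_f], right
    translation by [g] is an isomorphism. *)

Set Implicit Arguments.
Unset Strict Implicit.
Unset Printing Implicit Defensive.
Import GRing.Theory.
Local Open Scope ring_scope.

Lemma sum_pred1_uniq (T : eqType) (V : nmodType) (r : seq T) (j : T) (F : T -> V) :
  uniq r -> \sum_(i <- r | i == j) F i = if j \in r then F j else 0.
Proof.
elim: r => [|x r IH] /=; first by rewrite big_nil.
case/andP => xr ur; rewrite big_cons IH // in_cons.
by case: (eqVneq x j) => [<-|nx] /=; rewrite ?(negPf xr) ?addr0.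
Qed.

Lemma sum_if_uniq (T : eqType) (V : nmodType) (r : seq T) (j : T) (c : V) :
  uniq r -> \sum_(i <- r) (if i == j then c else 0) = if j \in r then c else 0.
Proof. by move=> ur; rewrite -big_mkcond sum_pred1_uniq. Qed.

Section Tensors.
Variables (k : fieldType) (W : lmodType k).

Lemma tcoef_flatten (B : eqType) (L : seq (seq (W * B))) b :
  tcoef (flatten L) b = \sum_(l <- L) tcoef l b.
Proof. by rewrite /tcoef big_flatten. Qed.

Lemma tcoef_map (B : eqType) (T : Type) (s : seq T) (h : T -> W * B) b :
  tcoef (map h s) b = \sum_(x <- s | (h x).2 == b) (h x).1.
Proof. by rewrite /tcoef big_map. Qed.

Lemma tcoef_seq1 (B : eqType) (v : W) (b b' : B) :
  tcoef [:: (v, b)] b' = if b == b' then v else 0.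
Proof. by rewrite /tcoef big_cons big_nil /=; case: ifP; rewrite ?addr0. Qed.

Lemma tcoef_notin (B : eqType) (t : seq (W * B)) b :
  b \notin map snd t -> tcoef t b = 0.
Proof.
move=> nb; rewrite /tcoef big_seq_cond big1 // => x /andP [xt /eqP xb].
by case/negP: nb; rewrite -xb; apply: map_f.
Qed.

Lemma tcoef_tnorm_map (B : eqType) (W' : lmodType k) (phi : W -> W')
    (t : seq (W * B)) b :
  phi 0 = 0 -> tcoef [seq (phi x.1, x.2) | x <- tnorm t] b = phi (tcoef t b).
Proof.
move=> phi0; rewrite /tnorm -map_comp [LHS]/tcoef big_map /=.
rewrite sum_pred1_uniq ?undup_uniq //.
by rewrite mem_undup; case: ifP => // /negbT /tcoef_notin ->.
Qed.

Lemma tcoef_tnorm (B : eqType) (t : seq (W * B)) b : tcoef (tnorm t) b = tcoef t b.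
Proof.
rewrite -[RHS](@tcoef_tnorm_map _ _ id) //; congr tcoef.
by rewrite -[LHS]map_id; apply: eq_map => -[].
Qed.

Lemma tcoef_pair (B B' : eqType) (s : seq (W * B)) (c : B') g (b : B') :
  tcoef [seq (y.1, (y.2, c)) | y <- s] (g, b) = if c == b then tcoef s g else 0.
Proof.
rewrite tcoef_map /=; case: (eqVneq c b) => [->|nc].
  by apply: eq_bigl => y; rewrite xpair_eqE eqxx andbT.
by rewrite big1 // => y; rewrite xpair_eqE (negPf nc) andbF.
Qed.

Lemma tcoef_rho_id (B B1 : eqType) (rho : W -> seq (W * B1)) (t : seq (W * B)) g b :
  (forall g, tcoef (rho 0) g = 0) ->
  tcoef (rho_id rho t) (g, b) = tcoef (rho (tcoef t b)) g.
Proof.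
move=> rho0; rewrite /rho_id tcoef_flatten big_map [tnorm t]/tnorm big_map.
under eq_bigr => b' _ do rewrite /= tcoef_pair tcoef_tnorm.
rewrite -big_mkcond /= sum_pred1_uniq ?undup_uniq //.
by rewrite mem_undup; case: ifP => // /negbT /tcoef_notin ->.
Qed.

Lemma tcoef_id_delta (B B1 B2 : eqType) (delta : B -> seq (k * (B1 * B2)))
    (t : seq (W * B)) c :
  tcoef (id_delta delta t) c =
  \sum_(x <- t) \sum_(d <- delta x.2 | d.2 == c) d.1 *: x.1.
Proof.
by rewrite /id_delta tcoef_flatten big_map; apply: eq_bigr => x _; rewrite tcoef_map.
Qed.

End Tensors.

Section FiniteSupport.
Variables (k : fieldType) (U : lmodType k) (X : eqType).

Lemma fsuppP (t : X -> U) :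
  fin_supp t -> uniq (fsupp t) /\ forall x, t x != 0 -> x \in fsupp t.
Proof.
move=> [s hs]; apply: (@epsilon_spec _ (inhabits [::])
  (fun s => uniq s /\ forall x, t x != 0 -> x \in s)).
exists (undup s); split; first exact: undup_uniq.
by move=> x /hs; rewrite mem_undup.
Qed.

Lemma notin_fsupp (t : X -> U) x : fin_supp t -> x \notin fsupp t -> t x = 0.
Proof.
move=> /fsuppP [_ h] nx; case: (eqVneq (t x) 0) => // /h.
by rewrite (negPf nx).
Qed.

Lemma tcoef_frep (t : X -> U) b : fin_supp t -> tcoef (frep t) b = t b.
Proof.
move=> ft; have [u _] := fsuppP ft.
rewrite /frep tcoef_map /= sum_pred1_uniq //.
by case: ifP => // /negbT nb; rewrite notin_fsupp.
Qed.

Lemma sum_fsupp_if (V : nmodType) (t : X -> U) x0 (c : V) :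
  fin_supp t -> (t x0 = 0 -> c = 0) ->
  \sum_(x <- fsupp t) (if x == x0 then c else 0) = c.
Proof.
move=> ft c0; rewrite sum_if_uniq; last by case: (fsuppP ft).
by case: ifP => // /negbT /(notin_fsupp ft) /c0.
Qed.

End FiniteSupport.

Section Action.
Variables (F : groupType) (G : finGroupType) (tr : G -> F -> F).
Hypothesis tr1 : forall e, tr 1%g e = e.
Hypothesis trM : forall g g' e, tr (g * g')%g e = tr g (tr g' e).

Lemma trK g : cancel (tr g) (tr g^-1).
Proof. by move=> e; rewrite -trM mulVg tr1. Qed.

Lemma trKV g : cancel (tr g^-1) (tr g).
Proof. by move=> e; rewrite -trM mulgV tr1. Qed.

Lemma tr_inj g : injective (tr g).
Proof. exact: can_inj (trK g). Qed.

Lemma stabP e g : reflect (tr g e = e) (g \in stab tr e).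
Proof. by rewrite inE; apply: eqP. Qed.

Lemma stab1 e : 1%g \in stab tr e.
Proof. exact/stabP. Qed.

Lemma stabM e g h : g \in stab tr e -> h \in stab tr e -> (g * h)%g \in stab tr e.
Proof. by move=> /stabP gs /stabP hs; apply/stabP; rewrite trM hs gs. Qed.

Lemma stabV e g : g \in stab tr e -> g^-1%g \in stab tr e.
Proof. by move=> /stabP gs; apply/stabP; rewrite -{1}gs trK. Qed.

Lemma stabVE e g : (g^-1%g \in stab tr e) = (g \in stab tr e).
Proof. by apply/idP/idP => /stabV //; rewrite invgK. Qed.

Lemma stabML e g h : g \in stab tr e -> ((g * h)%g \in stab tr e) = (h \in stab tr e).
Proof.
move=> gs; apply/idP/idP; last exact: stabM.
by move=> ghs; rewrite -(mulKg g h); apply: stabM => //; apply: stabV.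
Qed.

Lemma tr_stabL e g x : g \in stab tr e -> tr (x * g)%g e = tr x e.
Proof. by rewrite trM => /stabP ->. Qed.

End Action.

Lemma scalefE (k : fieldType) (X : Type) (c : k) (u : X -> k^o) p :
  (c *: u) p = c * u p.
Proof. by []. Qed.

Lemma scale_addfE (k : fieldType) (X : Type) (c : k) (u v : X -> k^o) p :
  (c *: u + v) p = c * u p + v p.
Proof. by []. Qed.

Section Induced.
Variables (k : fieldType) (F : groupType) (G : finGroupType) (tr : G -> F -> F).

Definition ind_coef (t : G * F -> k^o) (b : G * F) : G * F -> k^o :=
  fun p => if p.2 == tr b.1 b.2 then t (p.1 * b.1, b.2)%g else 0.

Lemma tcoef_ind_coact (t : G * F -> k^o) b :
  fin_supp t -> tcoef (ind_coact tr t) b = ind_coef t b.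
Proof.
case: b => y e ft; apply/funext => -[p1 p2].
rewrite /ind_coact tcoef_flatten big_map /frep big_map fct_sumE.
rewrite -[RHS](sum_fsupp_if (x0 := ((p1 * y)%g, e)) ft); last first.
  by rewrite /ind_coef /= => ->; rewrite if_same.
apply: eq_bigr => -[x1 x2] _.
rewrite /deltaH -map_comp tcoef_map /= fct_sumE.
case: (eqVneq x2 e) => [->|nx]; last first.
  rewrite big1; last by move=> z; rewrite xpair_eqE (negPf nx) andbF.
  by rewrite xpair_eqE (negPf nx) andbF.
under eq_bigl => z do rewrite xpair_eqE eqxx andbT.
rewrite sum_pred1_uniq ?enum_uniq // mem_enum inE /dfun scale1r /ind_coef /=.
rewrite !xpair_eqE eqxx andbT; case: (p2 == tr y e); rewrite ?andbF ?andbT ?if_same //.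
case: (eqVneq x1 (p1 * y)%g) => [->|nx1]; first by rewrite mulgK eqxx.
case: (eqVneq p1 (x1 * y^-1)%g) => // ep; case/negP: nx1.
by rewrite ep mulgVK.
Qed.

Hypothesis tr1 : forall e, tr 1%g e = e.
Hypothesis trM : forall g g' e, tr (g * g')%g e = tr g (tr g' e).

Definition ind_space (e : F) (beta : G -> k) (t : G * F -> k^o) : Prop :=
  (forall x e', tr x e' != e -> t (x, e') = 0) /\
  (forall g x e', g \in stab tr e -> tr x e' = e ->
     t ((g * x)%g, e') = beta g * t (x, e')).

Lemma ind_space_fin_supp e beta t : ind_space e beta t -> fin_supp t.
Proof.
move=> [h _]; exists [seq (x, tr x^-1 e) | x <- enum G] => -[x e'] nz.
case: (eqVneq (tr x e') e) => [<-|ne]; last by rewrite h ?eqxx in nz.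
by apply/mapP; exists x; rewrite ?mem_enum // trK.
Qed.

Lemma tcoef_ind_coact_space e beta t b :
  ind_space e beta t -> tcoef (ind_coact tr t) b = ind_coef t b.
Proof. by move=> Vt; rewrite tcoef_ind_coact //; apply: ind_space_fin_supp Vt. Qed.

Lemma ind_space_subspace e beta : subspace (ind_space e beta).
Proof.
split; first by split => * //=; rewrite mulr0.
move=> c u v [h1 h2] [h1' h2']; split => [x e' ne|g x e' gs ex].
  by rewrite scale_addfE h1 ?h1' // mulr0 addr0.
by rewrite !scale_addfE h2 ?h2' // mulrDr mulrCA.
Qed.

Lemma ind_coef_closed e beta t b :
  ind_space e beta t -> ind_space e beta (ind_coef t b).
Proof.
case: b => y e' [h1 h2]; split => [x e'' ne|g x e'' gs ex]; rewrite /ind_coef /=.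
  by case: eqP => // ef; apply: h1; rewrite trM -ef.
case: eqP => [ef|_]; last by rewrite mulr0.
by rewrite -mulgA h2 // trM -ef.
Qed.

Lemma tcoef_rho_tens_e (rhoU : k^o -> seq (k^o * G)) (e : F) u g e' :
  tcoef (rho_tens_e rhoU e u) (g, e') = if e == e' then tcoef (rhoU u) g else 0.
Proof. by rewrite /rho_tens_e tcoef_pair tcoef_tnorm. Qed.

Lemma tcoef_lambda_frep e (t : G * F -> k^o) g e1 x e2 : fin_supp t ->
  tcoef (id_delta (lambdaH k tr e) (frep t)) ((g, e1), (x, e2)) =
  if (g \in stab tr e) && (e1 == tr x e2) then t ((g * x)%g, e2) else 0.
Proof.
move=> ft; rewrite tcoef_id_delta /frep big_map.
rewrite -[RHS](sum_fsupp_if (x0 := ((g * x)%g, e2)) ft); last first.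
  by move=> ->; rewrite if_same.
apply: eq_bigr => -[y1 y2] _ /=.
rewrite /lambdaH big_filter_cond /deltaH big_map /=.
rewrite (eq_bigl (fun z => (z == x) && [&& (y1 * x^-1)%g \in stab tr e,
    (y1 * x^-1 == g)%g, tr x y2 == e1 & y2 == e2])); last first.
  move=> z /=; rewrite !xpair_eqE.
  by case: (eqVneq z x) => [->|nz]; rewrite /= ?andbF // !andbA.
rewrite big_mkcondr sum_pred1_uniq ?enum_uniq // mem_enum scale1r xpair_eqE.
case: (eqVneq y2 e2) => [->|ny]; last by rewrite !andbF ?if_same.
rewrite !andbT; case: (eqVneq y1 (g * x)%g) => [->|ny1].
  by rewrite mulgK eqxx /=; case: (g \in stab tr e); rewrite //= eq_sym.
case: (eqVneq (y1 * x^-1)%g g) => [eg|]; last by rewrite !andbF ?if_same.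
by case/negP: ny1; rewrite -eg mulgVK.
Qed.

Lemma cotensor_spaceE (rhoU : k^o -> seq (k^o * G)) e beta t :
  (forall c g, tcoef (rhoU c) g = if g \in stab tr e then c * beta g else 0) ->
  beta 1%g = 1 ->
  cotensor_space tr rhoU e t <-> ind_space e beta t.
Proof.
move=> hrho beta1.
have coefE (ft : fin_supp t) g e1 x e2 :
    tcoef (rho_id (rho_tens_e rhoU e) (frep t)) ((g, e1), (x, e2)) =
    if e == e1 then tcoef (rhoU (t (x, e2))) g else 0.
  rewrite tcoef_rho_id ?tcoef_rho_tens_e ?tcoef_frep // => -[g' e'].
  by rewrite tcoef_rho_tens_e hrho mul0r !if_same.
split.
  move=> [ft E]; have E' g e1 x e2 := etrans (esym (coefE ft g e1 x e2))
    (etrans (E ((g, e1), (x, e2))) (tcoef_lambda_frep _ _ _ _ _ ft)).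
  split => [x e2 ne|g x e2 gs ex].
    have := E' 1%g e x e2.
    by rewrite hrho eqxx stab1 // beta1 mulr1 /= eq_sym (negPf ne).
  by have := E' g e x e2; rewrite hrho eqxx gs ex eqxx /= mulrC => ->.
move=> [h1 h2]; have ft := ind_space_fin_supp (conj h1 h2).
split => // -[[g e1] [x e2]]; rewrite coefE // hrho tcoef_lambda_frep //.
case gs: (g \in stab tr e); last by rewrite if_same.
case: (eqVneq (tr x e2) e) => [ex|ne].
  by rewrite ex eq_sym; case: (eqVneq e1 e) => // _; rewrite h2 // mulrC.
rewrite h1 // mul0r !if_same h1 ?if_same // trM.
by move/stabP: gs => gs; rewrite -[X in _ != X]gs (inj_eq (tr_inj tr1 trM (g := g))).
Qed.

End Induced.

Section CoefIso.
Variable k : fieldType.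

Definition lin_on (W1 W2 : lmodType k) (S1 : W1 -> Prop) (phi : W1 -> W2) :=
  forall (a : k) u v, S1 u -> S1 v -> phi (a *: u + v) = a *: phi u + phi v.

Section Linear.
Variables (W1 W2 : lmodType k) (S1 : W1 -> Prop) (phi : W1 -> W2).
Hypotheses (S1sub : subspace S1) (phi_lin : lin_on S1 phi).

Lemma lin_on0 : phi 0 = 0.
Proof.
have [S0 _] := S1sub; have := phi_lin 1 S0 S0; rewrite !scale1r addr0 => h.
by apply: (@addrI _ (phi 0)); rewrite -h addr0.
Qed.

Lemma lin_onZ c w : S1 w -> phi (c *: w) = c *: phi w.
Proof. by move=> Sw; have := phi_lin c Sw S1sub.1; rewrite !addr0 lin_on0 addr0. Qed.

Lemma lin_on_sum (I : Type) (r : seq I) (c : I -> k) (u : I -> W1) :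
  (forall i, S1 (u i)) ->
  S1 (\sum_(i <- r) c i *: u i) /\
  phi (\sum_(i <- r) c i *: u i) = \sum_(i <- r) c i *: phi (u i).
Proof.
move=> Su; elim: r => [|x r [IH1 IH2]]; first by rewrite !big_nil lin_on0; case: S1sub.
by rewrite !big_cons; split; [exact: S1sub.2 | rewrite phi_lin // IH2].
Qed.

End Linear.

Lemma dual_space_lin (W : lmodType k) (S : W -> Prop) (phi : W -> k^o) :
  dual_space S phi -> lin_on S phi.
Proof. by case. Qed.

Definition coef_iso (W1 W2 : lmodType k) (B : Type)
    (S1 : W1 -> Prop) (C1 : W1 -> B -> W1) (S2 : W2 -> Prop) (C2 : W2 -> B -> W2) :=
  exists phi : W1 -> W2,
    [/\ lin_on S1 phi, (forall u, S1 u -> S2 (phi u)),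
        (forall u v, S1 u -> S1 v -> phi u = phi v -> u = v),
        (forall w, S2 w -> exists2 u, S1 u & phi u = w) &
        (forall u b, S1 u -> C2 (phi u) b = phi (C1 u b))].

Lemma rcomod_isoE (W1 W2 : lmodType k) (B : eqType) (S1 : W1 -> Prop)
    (rho1 : W1 -> seq (W1 * B)) (S2 : W2 -> Prop) (rho2 : W2 -> seq (W2 * B)) :
  subspace S1 ->
  rcomod_iso S1 rho1 S2 rho2 <->
  coef_iso S1 (fun u => tcoef (rho1 u)) S2 (fun w => tcoef (rho2 w)).
Proof.
move=> S1sub; split => -[phi [l m i s c]]; exists phi; split => // u.
  by move=> b Su; have := c u Su b; rewrite tcoef_tnorm_map ?(lin_on0 S1sub l).
by move=> Su b; rewrite tcoef_tnorm_map ?(lin_on0 S1sub l) // c.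
Qed.

Lemma coef_iso_ext (W1 W2 : lmodType k) (B : Type) (S1 : W1 -> Prop) C1 C1'
    (S2 : W2 -> Prop) C2 C2' :
  (forall u (b : B), S1 u -> C1 u b = C1' u b) ->
  (forall w (b : B), S2 w -> C2 w b = C2' w b) ->
  coef_iso S1 C1 S2 C2 -> coef_iso S1 C1' S2 C2'.
Proof.
move=> e1 e2 [phi [l m i s c]]; exists phi; split => // u b Su.
by rewrite -e1 // -e2 ?c //; apply: m.
Qed.

Lemma coef_iso_trans (W1 W2 W3 : lmodType k) (B : Type) (S1 : W1 -> Prop) C1
    (S2 : W2 -> Prop) C2 (S3 : W3 -> Prop) (C3 : W3 -> B -> W3) :
  coef_iso S1 C1 S2 C2 -> coef_iso S2 C2 S3 C3 -> coef_iso S1 C1 S3 C3.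
Proof.
move=> [phi [l m i s c]] [psi [l' m' i' s' c']]; exists (psi \o phi); split.
- by move=> a u v Su Sv /=; rewrite l // l' //; apply: m.
- by move=> u Su; apply/m'/m.
- by move=> u v Su Sv /= /i' e; apply: i => //; apply: e; apply: m.
- by move=> w /s' [v Sv <-]; have [u Su <-] := s v Sv; exists u.
- by move=> u b Su /=; rewrite c' ?c //; apply: m.
Qed.

Lemma coef_iso_sym (W1 W2 : lmodType k) (B : Type) (S1 : W1 -> Prop) C1
    (S2 : W2 -> Prop) (C2 : W2 -> B -> W2) :
  subspace S1 -> subspace S2 ->
  (forall u b, S1 u -> S1 (C1 u b)) -> (forall w b, S2 w -> S2 (C2 w b)) ->
  coef_iso S1 C1 S2 C2 -> coef_iso S2 C2 S1 C1.
Proof.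
move=> [_ S1lin] [_ S2lin] C1closed C2closed [phi [l m i s c]].
pose psi w := epsilon (inhabits 0) (fun u => S1 u /\ phi u = w).
have psiP w : S2 w -> S1 (psi w) /\ phi (psi w) = w.
  move=> Sw; apply: (@epsilon_spec _ (inhabits 0) (fun u => S1 u /\ phi u = w)).
  by have [u Su e] := s w Sw; exists u.
exists psi; split.
- move=> a w w' Sw Sw'; have [p1 e1] := psiP _ Sw; have [p2 e2] := psiP _ Sw'.
  have [p3 e3] := psiP _ (S2lin a _ _ Sw Sw').
  by apply: i => //; [apply: S1lin | rewrite l // e1 e2 e3].
- by move=> w /psiP [].
- move=> w w' Sw Sw' e; have [_ e1] := psiP _ Sw; have [_ e2] := psiP _ Sw'.
  by rewrite -e1 -e2 e.
- move=> u Su; exists (phi u); first exact: m.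
  by have [? ?] := psiP _ (m _ Su); apply: i.
- move=> w b Sw; have [p1 e1] := psiP _ Sw; have [p2 e2] := psiP _ (C2closed w b Sw).
  by apply: i => //; [apply: C1closed | rewrite e2 -c // e1].
Qed.

End CoefIso.

Section ActionByAutomorphisms.
Variables (F : groupType) (G : finGroupType) (tr : G -> F -> F).
Hypothesis trmul : forall g e e', tr g (e * e')%g = (tr g e * tr g e')%g.

Lemma tr1g g : tr g 1%g = 1%g.
Proof. by apply: (@mulgI _ (tr g 1%g)); rewrite -trmul !mulg1. Qed.

Lemma trV g e : tr g e^-1%g = (tr g e)^-1%g.
Proof. by apply/esym/mulg1_eq; rewrite -trmul mulgV tr1g. Qed.

Lemma stab_invg e : stab tr e^-1%g = stab tr e.
Proof. by apply/setP => g; rewrite !inE trV eqg_inv. Qed.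

End ActionByAutomorphisms.

Section OneDimComodule.
Variables (k : fieldType) (F : groupType) (G : finGroupType) (tr : G -> F -> F).
Variables (f : F) (a : G -> k).
Hypothesis tr1 : forall e, tr 1%g e = e.
Hypothesis trM : forall g g' e, tr (g * g')%g e = tr g (tr g' e).
Hypothesis trmul : forall g e e', tr g (e * e')%g = (tr g e * tr g e')%g.

Local Notation Gf := (stab tr f).

Lemma tcoef_rhoV c g : tcoef (rhoV tr f a c) g = if g \in Gf then c * a g else 0.
Proof.
rewrite /rhoV tcoef_map /= (@sum_pred1_uniq _ _ _ _ (fun h => (c * a h : k^o))).
  by rewrite mem_enum.
exact: enum_uniq.
Qed.

Lemma tcoef_rhoVd c g :
  tcoef (rhoVd tr f a c) g = if g \in stab tr f^-1%g then c * a g^-1%g else 0.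
Proof.
rewrite /rhoVd tcoef_map /= (eq_bigl (fun h => h == g^-1%g)); last first.
  by move=> h; rewrite eqg_invLR.
rewrite (@sum_pred1_uniq _ _ _ _ (fun h => (c * a h : k^o))) ?enum_uniq //.
by rewrite mem_enum stab_invg // stabVE.
Qed.

Lemma rhoV_char : (forall x y : G, (x * y = y * x)%g) ->
  is_rcomod (deltaK k tr f) (@epsK k G) (fun _ : k^o => True) (rhoV tr f a) ->
  a 1%g = 1 /\ {in Gf &, {morph a : g h / (g * h)%g >-> g * h}}.
Proof.
move=> abel [_ _ _ coas cou]; split.
  have := cou 1 I; rewrite /rhoV big_map /epsK /=.
  rewrite (eq_bigr (fun g => if g == 1%g then (1 * a g : k^o) else 0)); last first.
    by move=> g _; case: eqP => _; rewrite ?scale1r ?scale0r.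
  by rewrite -big_mkcond sum_pred1_uniq ?enum_uniq // mem_enum stab1 // mul1r.
move=> g h gs hs; have := coas 1 I (h, g).
rewrite tcoef_rho_id; last by move=> g'; rewrite tcoef_rhoV mul0r if_same.
rewrite !tcoef_rhoV gs hs mul1r tcoef_id_delta /rhoV big_map /=.
rewrite (eq_bigr (fun g' => if g' == (h * g)%g then (1 * a g' : k^o) else 0)); last first.
  move=> g' _; rewrite /deltaK big_map /=.
  rewrite (eq_bigl (fun x => (x == g) && (g' * g^-1 == h)%g)); last first.
    by move=> x; rewrite xpair_eqE; case: (eqVneq x g) => [->|nx]; rewrite ?andbT ?andbF.
  rewrite big_mkcondr sum_pred1_uniq ?enum_uniq // mem_enum gs divg_eq.
  by case: ifP => _; rewrite ?scale1r.
rewrite -big_mkcond sum_pred1_uniq ?enum_uniq // mem_enum stabM //.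
by rewrite mul1r abel => ->.
Qed.

Lemma rhoV_isoE :
  rcomod_iso (fun _ : k^o => True) (rhoV tr f a) (fun _ : k^o => True) (rhoVd tr f a)
  <-> {in Gf, forall h, a h = a h^-1%g}.
Proof.
have Tsub : subspace (fun _ : k^o => True) by [].
rewrite rcomod_isoE //; split => [[phi [l _ i _ c]] h hs | ha].
  have phi0 := lin_on0 Tsub l.
  have phi1 : phi 1 != 0.
    by apply: contra_neq (oner_neq0 k^o) => e; apply: i; rewrite ?e.
  have := c 1 h I; rewrite tcoef_rhoV tcoef_rhoVd stab_invg // hs mul1r.
  have -> : phi (a h) = a h * phi 1.
    by rewrite -[a h in LHS]mulr1 (lin_onZ Tsub l).
  by move=> e; apply: (mulfI phi1); rewrite e mulrC.
exists id; split => //; first by move=> u _; exists u.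
move=> u g _; rewrite tcoef_rhoV tcoef_rhoVd stab_invg //.
by case gs: (g \in Gf); rewrite // (ha g gs).
Qed.

End OneDimComodule.

Section InducedDual.
Variables (k : fieldType) (F : groupType) (G : finGroupType) (tr : G -> F -> F).
Variables (f : F) (a : G -> k).
Hypothesis tr1 : forall e, tr 1%g e = e.
Hypothesis trM : forall g g' e, tr (g * g')%g e = tr g (tr g' e).
Hypothesis trmul : forall g e e', tr g (e * e')%g = (tr g e * tr g e')%g.
Hypothesis abel : forall x y : G, (x * y = y * x)%g.
Hypothesis a1 : a 1%g = 1.
Hypothesis aM : {in stab tr f &, {morph a : g h / (g * h)%g >-> g * h}}.
Hypothesis ch0 : [pchar k] =i pred0.

Local Notation Gf := (stab tr f).
Local Notation indV := (ind_space tr f a).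
Local Notation indVd := (ind_space tr f^-1 (fun g => a g^-1%g)).

Lemma aV h : h \in Gf -> a h^-1%g * a h = 1.
Proof. by move=> hs; rewrite -aM ?mulVg // stabV. Qed.

Definition ind_vec x : G * F -> k^o := fun p =>
  if (p.2 == tr x^-1%g f) && ((p.1 * x^-1)%g \in Gf) then a (p.1 * x^-1)%g else 0.

Lemma ind_vec_in x : indV (ind_vec x).
Proof.
split => [z e ne|g z e gs _]; rewrite /ind_vec /=.
  case: ifP => // /andP [/eqP ex /stabP zs].
  by case/negP: ne; rewrite ex -trM zs.
rewrite -mulgA stabML //.
by case: ifP => [/andP [_ zs]|_]; [exact: aM | rewrite mulr0].
Qed.

Lemma ind_vecM h x : h \in Gf -> ind_vec (h * x)%g = a h^-1%g *: ind_vec x.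
Proof.
move=> hs; apply/funext => -[p1 p2]; rewrite scalefE /ind_vec /=.
have -> : (p1 * (h * x)^-1 = h^-1 * (p1 * x^-1))%g by rewrite invMg mulgA abel.
rewrite invMg tr_stabL ?stabV // stabML ?stabV //.
by case: ifP => /= [/andP [_ qs] | _]; [apply: aM => //; exact: stabV | rewrite mulr0].
Qed.

Lemma stab_card_neq0 : (#|Gf|%:R : k) != 0.
Proof.
move/pcharf0P: ch0 => ->; rewrite -lt0n card_gt0; apply/set0Pn.
by exists 1%g; apply: stab1.
Qed.

Lemma sum_stab_coset (z : G) (c : k) :
  \sum_(x : G) (if (z * x^-1)%g \in Gf then c else 0) = #|Gf|%:R * c.
Proof.
have hinj : injective (fun h : G => (h^-1 * z)%g) by move=> u v /mulIg /invg_inj.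
rewrite (reindex_inj hinj) /=.
under eq_bigr => h _ do rewrite invMg invgK mulVKg.
by rewrite -big_mkcond /= sumr_const mulr_natl.
Qed.

Lemma ind_space_decomp t : indV t ->
  t = (#|Gf|%:R)^-1 *: \sum_(x : G) t (x, tr x^-1%g f) *: ind_vec x.
Proof.
move=> [h1 h2]; apply/funext => -[z e].
rewrite scalefE fct_sumE /=; under eq_bigr => x _ do rewrite scalefE.
rewrite (eq_bigr (fun x => if (z * x^-1)%g \in Gf then t (z, e) else 0)).
  by rewrite sum_stab_coset mulKf ?stab_card_neq0.
move=> x _; rewrite /ind_vec /=.
case zs: ((z * x^-1)%g \in Gf); last by rewrite andbF mulr0.
have xz : (x * z^-1)%g \in Gf by rewrite -stabVE // invMg invgK.
have ez : tr z^-1%g f = tr x^-1%g f by rewrite -[z^-1%g](mulKg x) tr_stabL.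
rewrite andbT; case: (eqVneq e (tr x^-1%g f)) => [->|ne].
  by have := h2 _ x _ zs (trKV tr1 trM _ _); rewrite mulgVK mulrC.
rewrite mulr0 h1 //; apply: contra ne => /eqP ezf.
by rewrite -ez -ezf trK.
Qed.

Lemma dual_ind_eval phi w : dual_space indV phi -> indV w ->
  phi w = (#|Gf|%:R)^-1 * \sum_(x : G) w (x, tr x^-1%g f) * phi (ind_vec x).
Proof.
move=> /dual_space_lin l Vw; have sub := ind_space_subspace tr f a.
have [Vsum phi_sum] :=
  lin_on_sum sub l (index_enum G) (fun x => w (x, tr x^-1%g f)) ind_vec_in.
by rewrite {1}(ind_space_decomp Vw) (lin_onZ sub l _ Vsum) phi_sum.
Qed.

Lemma dual_ind_ext phi phi' : dual_space indV phi -> dual_space indV phi' ->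
  (forall x, phi (ind_vec x) = phi' (ind_vec x)) -> phi = phi'.
Proof.
move=> dp dp' he; apply/funext => w.
case: (pselect (indV w)) => Vw; last by rewrite dp.2 // dp'.2.
rewrite (dual_ind_eval dp Vw) (dual_ind_eval dp' Vw); congr (_ * _).
by apply: eq_bigr => x _; rewrite he.
Qed.

Lemma dual_space_subspace : subspace (dual_space indV).
Proof.
split=> [|c u v [lu zu] [lv zv]]; first by split=> [*|//]; rewrite /= mulr0 addr0.
split=> [c' w w' Vw Vw'|w nw]; last by rewrite scale_addfE zu // zv // mulr0 addr0.
rewrite !scale_addfE lu // lv // mulrDr !mulrDr !mulrA (mulrC c c') -!addrA.
by congr (_ + _); rewrite addrCA.
Qed.

Variables (tl : G -> F -> G)
  (rhod : ((G * F -> k^o) -> k^o) -> seq (((G * F -> k^o) -> k^o) * (G * F))).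
Hypothesis tl_triv : forall g e, tl g e = g.
Hypothesis rhod_dual :
  is_dual_coact (antipH k tr tl) indV (@ind_coact k F G tr k^o) rhod.

Lemma tcoef_rhod phi y e w : dual_space indV phi -> indV w ->
  tcoef (rhod phi) (y, e) w = phi (ind_coef tr w (y^-1%g, tr y e^-1%g)).
Proof.
move=> dp Vw; have ft := ind_space_fin_supp tr1 trM Vw.
have := (rhod_dual dp).2 w Vw (y, e).
have -> : tcoef [seq ((x.1 w : k^o), x.2) | x <- rhod phi] (y, e) =
    tcoef (rhod phi) (y, e) w by rewrite tcoef_map /tcoef fct_sumE.
move=> ->.
set q := (y^-1%g, tr y e^-1%g).
rewrite tcoef_flatten [tnorm _]/tnorm !big_map.
rewrite (eq_bigr (fun b => if b == q then phi (ind_coef tr w q) else 0)); last first.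
  move=> [b1 b2] _; rewrite /= tcoef_seq1 tl_triv mul1r.
  have -> : ((b1^-1, (tr b1 b2)^-1)%g == (y, e)) = ((b1, b2) == q).
    rewrite !xpair_eqE eqg_invLR; case: (eqVneq b1 y^-1%g) => [->|] //=.
    by rewrite eqg_invLR; apply/eqP/eqP => [<-|->]; rewrite ?trKV ?trK.
  by case: eqP => // ->; rewrite tcoef_ind_coact.
rewrite sum_if_uniq ?undup_uniq // mem_undup.
case: ifP => // /negbT nq; rewrite -tcoef_ind_coact // tcoef_notin //.
exact/esym/(lin_on0 (ind_space_subspace tr f a) (dual_space_lin dp)).
Qed.

Definition dual_to_ind (phi : (G * F -> k^o) -> k^o) : G * F -> k^o :=
  fun p => if p.2 == tr p.1^-1%g f^-1%g then phi (ind_vec p.1) else 0.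

Lemma dual_to_ind_in phi : dual_space indV phi -> indVd (dual_to_ind phi).
Proof.
move=> dp; split => [x e ne|g x e gs ex]; rewrite /dual_to_ind /=.
  by case: eqP => // ee; case/negP: ne; rewrite ee trKV.
have -> : e = tr x^-1%g f^-1%g by rewrite -ex trK.
rewrite invMg tr_stabL ?stabV // eqxx.
rewrite stab_invg // in gs; rewrite ind_vecM //.
exact: (lin_onZ (ind_space_subspace tr f a) (dual_space_lin dp) _ (ind_vec_in x)).
Qed.

Lemma dual_to_ind_lin : lin_on (dual_space indV) dual_to_ind.
Proof.
move=> c u v _ _; apply/funext => -[x e]; rewrite scale_addfE /dual_to_ind /=.
by case: ifP => _; rewrite ?mulr0 ?addr0.
Qed.

Lemma dual_to_ind_inj u v : dual_space indV u -> dual_space indV v ->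
  dual_to_ind u = dual_to_ind v -> u = v.
Proof.
move=> du dv e; apply: dual_ind_ext => // x.
by have := congr1 (fun t => t (x, tr x^-1%g f^-1%g)) e; rewrite /dual_to_ind /= eqxx.
Qed.

(* The preimage of [s] is read off [dual_ind_eval]. *)
Lemma dual_to_ind_surj s :
  indVd s -> exists2 phi, dual_space indV phi & dual_to_ind phi = s.
Proof.
move=> [h1 h2].
pose phi w : k^o := if `[< indV w >] then
  (#|Gf|%:R)^-1 * \sum_(x : G) s (x, tr x^-1%g f^-1%g) * w (x, tr x^-1%g f) else 0.
exists phi.
  split=> [c u v Vu Vv|w nw]; last by rewrite /phi asboolF.
  rewrite /phi !asboolT //; last exact: (ind_space_subspace tr f a).2.
  under eq_bigr => x _ do rewrite scale_addfE mulrDr mulrCA.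
  by rewrite big_split /= -mulr_sumr mulrDr mulrCA.
apply/funext => -[y e]; rewrite /dual_to_ind /=.
case: eqP => [ey|ne]; last first.
  by rewrite h1 //; apply/eqP => ey; apply: ne; rewrite -ey trK.
rewrite /phi (asboolT (ind_vec_in y)).
rewrite (eq_bigr (fun x => if (y * x^-1)%g \in Gf then s (y, e) else 0)).
  by rewrite sum_stab_coset mulKf ?stab_card_neq0.
move=> x _; rewrite /ind_vec /= -[(y * x^-1)%g \in Gf]stabVE // invMg invgK.
case xs: ((x * y^-1)%g \in Gf); last by rewrite andbF mulr0.
have ex : x^-1%g = (y^-1 * (x * y^-1)^-1)%g by rewrite invMg invgK mulKg.
have xs' : (x * y^-1)%g \in stab tr f^-1%g by rewrite stab_invg.
rewrite ex !tr_stabL ?stabV // eqxx /=.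
have := h2 _ y _ xs' (trKV tr1 trM _ _); rewrite mulgVK => ->.
by rewrite mulrAC aV // mul1r ey.
Qed.

Lemma ind_coef_ind_vec x y e :
  ind_coef tr (ind_vec x) (y^-1%g, tr y e^-1%g) =
  if e == tr (x * y)^-1%g f^-1%g then ind_vec (x * y)%g else 0.
Proof.
have key : (e == tr (x * y)^-1%g f^-1%g) = (tr y e^-1%g == tr x^-1%g f).
  rewrite trV // eq_sym eqg_invLR eq_sym.
  by rewrite -[LHS](inj_eq (tr_inj tr1 trM (g := y))) -trM invMg mulVKg.
apply/funext => -[p1 p2]; rewrite /ind_coef /ind_vec /= trK // key.
case: (eqVneq (tr y e^-1%g) (tr x^-1%g f)) => [ey|_]; last by rewrite if_same.
have ef : e^-1%g = tr (y^-1 * x^-1)%g f by rewrite trM -ey trK.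
by rewrite /= invMg mulgA ef; case: (p2 == _).
Qed.

Lemma dual_to_ind_coef u b : dual_space indV u ->
  ind_coef tr (dual_to_ind u) b = dual_to_ind (tcoef (rhod u) b).
Proof.
case: b => y e du; apply/funext => -[x e'].
have coefE : tcoef (rhod u) (y, e) (ind_vec x) =
    if e == tr (x * y)^-1%g f^-1%g then u (ind_vec (x * y)%g) else 0.
  rewrite tcoef_rhod ?ind_coef_ind_vec //; last exact: ind_vec_in.
  case: ifP => // _; exact: (lin_on0 (ind_space_subspace tr f a) (dual_space_lin du)).
rewrite /ind_coef /dual_to_ind /= coefE.
case: (eqVneq e (tr (x * y)^-1%g f^-1%g)) => [ee|_]; last by rewrite !if_same.
by rewrite ee -trM invMg mulVKg.
Qed.

Lemma dual_coef_iso :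
  coef_iso (dual_space indV) (fun phi => tcoef (rhod phi)) indVd (ind_coef tr).
Proof.
exists dual_to_ind; split.
- exact: dual_to_ind_lin.
- exact: dual_to_ind_in.
- exact: dual_to_ind_inj.
- exact: dual_to_ind_surj.
- by move=> u b du; rewrite dual_to_ind_coef.
Qed.

Lemma ind_vec1_eigen h :
  h \in Gf -> ind_coef tr (ind_vec 1%g) (h, f) = a h *: ind_vec 1%g.
Proof.
move=> hs; apply/funext => -[p1 p2].
rewrite scalefE /ind_coef /ind_vec /= invg1 !mulg1 tr1.
move/stabP: (hs) => ->; rewrite eqxx /= abel stabML //.
case: (p2 == f); last by rewrite mulr0.
by case ps: (p1 \in Gf); rewrite ?mulr0 // aM // mulrC.
Qed.

Lemma ind_vec1_neq0 : ind_vec 1%g != 0.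
Proof.
apply: contra_neq (oner_neq0 k) => /(congr1 (fun t => t (1%g, f))).
by rewrite /ind_vec /= invg1 mulg1 tr1 eqxx stab1 // a1.
Qed.

Lemma indVd_fixed_eigen s h : indVd s -> ind_coef tr s (1%g, f) = s ->
  h \in Gf -> ind_coef tr s (h, f) = a h^-1%g *: s.
Proof.
move=> [s_supp s_eq] s_fixed hs; have /stabP hf := hs.
apply/funext => -[q1 q2]; rewrite scalefE -{2}s_fixed /ind_coef /= tr1 mulg1 hf.
case: (q2 == f); last by rewrite mulr0.
case: (eqVneq (tr q1 f) f^-1%g) => [qf|nqf].
  by rewrite abel s_eq // stab_invg.
by rewrite !s_supp ?mulr0 // trM hf.
Qed.

Lemma ind_coef_iso_cond : coef_iso indV (ind_coef tr) indVd (ind_coef tr) ->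
  (exists g, tr g f = f^-1%g) /\ {in Gf, forall h, a h = a h^-1%g}.
Proof.
move=> [psi [l m i _ c]]; have sub := ind_space_subspace tr f a.
set s0 := psi (ind_vec 1%g); have Vs0 : indVd s0 := m _ (ind_vec_in 1%g).
have psi_eigen h : h \in Gf -> ind_coef tr s0 (h, f) = a h *: s0.
  move=> hs; rewrite /s0 c ?(ind_vec1_eigen hs) //; last exact: ind_vec_in.
  exact: (lin_onZ sub l _ (ind_vec_in 1%g)).
have s0_fixed : ind_coef tr s0 (1%g, f) = s0 by rewrite psi_eigen ?stab1 // a1 scale1r.
have s0_neq0 : s0 != 0.
  apply: contra_neq ind_vec1_neq0 => s00.
  by apply: i; [exact: ind_vec_in | exact: sub.1 | rewrite -/s0 s00 (lin_on0 sub l)].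
have [[p1 p2] s0p] : exists p, s0 p != 0.
  apply: contrapT => nz; case/eqP: s0_neq0; apply/funext => p.
  by apply/eqP/negPn/negP => s0p; apply: nz; exists p.
have p2f : p2 = f.
  apply/eqP; apply: contraNT s0p => np.
  by rewrite -s0_fixed /ind_coef /= tr1 (negPf np).
rewrite {p2}p2f in s0p; split.
  exists p1; apply/eqP; apply: contraNT s0p => nf.
  by rewrite (Vs0.1 _ _ nf).
move=> h hs; have := congr1 (fun t => t (p1, f)) (psi_eigen h hs).
by rewrite indVd_fixed_eigen // !scalefE => e; apply: (mulIf s0p); rewrite e.
Qed.

Lemma ind_coef_iso_translate g0 : tr g0 f = f^-1%g ->
  {in Gf, forall h, a h = a h^-1%g} ->
  coef_iso indV (ind_coef tr) indVd (ind_coef tr).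
Proof.
move=> g0f a_inv.
have g0fV : tr g0 f^-1%g = f by rewrite trV // g0f invgK.
have g0Vf : tr g0^-1%g f = f^-1%g by rewrite -{1}g0fV trK.
have trS g x e : tr (x * g)%g e = tr g (tr x e) by rewrite abel trM.
pose shift g (t : G * F -> k^o) p := t ((p.1 * g)%g, p.2).
exists (shift g0); split.
- by move=> c u v _ _; apply/funext => p.
- move=> t [h1 h2]; split => [x e ne|g x e gs ex]; rewrite /shift /=.
    apply: h1; rewrite trS; apply: contra ne => /eqP e0.
    by rewrite -g0Vf -e0 trK.
  rewrite stab_invg // in gs.
  by rewrite -mulgA h2 ?(a_inv g gs) ?trS ?ex.
- move=> u v _ _ e; apply/funext => -[x e'].
  by have := congr1 (fun t => t ((x * g0^-1)%g, e')) e; rewrite /shift /= mulgVK.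
- move=> w [h1 h2]; exists (shift g0^-1%g w); last first.
    by apply/funext => -[x e]; rewrite /shift /= mulgK.
  split => [x e ne|g x e gs ex]; rewrite /shift /=.
    apply: h1; rewrite trS; apply: contra ne => /eqP e0.
    by rewrite -g0fV -e0 trKV.
  by rewrite -mulgA h2 ?(a_inv g gs) ?stab_invg ?trS ?ex.
- move=> u [y e] _; apply/funext => -[x e']; rewrite /shift /ind_coef /=.
  by rewrite -!mulgA (abel g0 y).
Qed.

Lemma dual_ind_iso : rcomod_iso (dual_space indV) rhod indVd (@ind_coact k F G tr k^o).
Proof.
apply/rcomod_isoE; first exact: dual_space_subspace.
apply: coef_iso_ext dual_coef_iso => // u b Vu.
by rewrite (tcoef_ind_coact_space tr1 trM b Vu).
Qed.

Lemma ind_iso_dual_iff :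
  rcomod_iso indV (@ind_coact k F G tr k^o) (dual_space indV) rhod <->
  rcomod_iso (fun _ : k^o => True) (rhoV tr f a) (fun _ : k^o => True) (rhoVd tr f a)
  /\ exists g : G, tr g f = f^-1%g.
Proof.
have coefE u b : indV u -> tcoef (ind_coact tr u) b = ind_coef tr u b.
  exact: tcoef_ind_coact_space.
rewrite rhoV_isoE // rcomod_isoE; last exact: ind_space_subspace.
split=> [iso|[a_inv [g gf]]].
  have [g_ex a_inv] := ind_coef_iso_cond (coef_iso_trans
    (coef_iso_ext coefE (fun _ _ _ => erefl) iso) dual_coef_iso).
  by split.
have dual_iso_sym := coef_iso_sym dual_space_subspace (ind_space_subspace tr _ _)
  (fun phi b dp => ((rhod_dual dp).1 b)) (fun u b => @ind_coef_closed _ _ _ _ trM _ _ u b)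
  dual_coef_iso.
apply: coef_iso_ext (coef_iso_trans (ind_coef_iso_translate gf a_inv) dual_iso_sym) => //.
by move=> u b Vu; rewrite coefE.
Qed.

End InducedDual.

Theorem proposition6p2 (k : closedFieldType) (F : groupType) (G : finGroupType)
  (tr : G -> F -> F) (tl : G -> F -> G) (f : F) (a : G -> k)
  (rhod : (((G * F) -> k^o) -> k^o) ->
          seq ((((G * F) -> k^o) -> k^o) * (G * F))) :
  [pchar k] =i pred0 ->
  abelian [set: G] ->
  matched_pair tr tl ->
  (forall g h, tl g h = g) ->
  is_rcomod (deltaK k tr f) (@epsK k G) (fun _ : k^o => True) (rhoV tr f a) ->
  is_dual_coact (antipH k tr tl) (cotensor_space tr (rhoV tr f a) f)
                (@ind_coact k F G tr k^o) rhod ->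
  [/\ stab tr (f^-1)%g = stab tr f,
      rcomod_iso (dual_space (cotensor_space tr (rhoV tr f a) f)) rhod
                 (cotensor_space tr (rhoVd tr f a) (f^-1)%g) (@ind_coact k F G tr k^o) &
      (rcomod_iso (cotensor_space tr (rhoV tr f a) f) (@ind_coact k F G tr k^o)
                  (dual_space (cotensor_space tr (rhoV tr f a) f)) rhod
       <->
       rcomod_iso (fun _ : k^o => True) (rhoV tr f a)
                  (fun _ : k^o => True) (rhoVd tr f a)
       /\ exists g : G, tr g f = (f^-1)%g)].
Proof.
move=> ch0 abG [[tr1 trM _ _] [tr_mul _]] tl_triv V_comod rhod_dual.
have trmul g e e' : tr g (e * e')%g = (tr g e * tr g e')%g by rewrite tr_mul tl_triv.
have abel (x y : G) : (x * y = y * x)%g.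
  by move/centsP: abG => /(_ x (finset.in_setT x) y (finset.in_setT y)).
have [a1 aM] := rhoV_char tr1 trM abel V_comod.
have indVE : cotensor_space tr (rhoV tr f a) f = ind_space tr f a.
  apply/funext => t; apply/propext/cotensor_spaceE => // c g.
  by rewrite tcoef_rhoV.
have indVdE : cotensor_space tr (rhoVd tr f a) f^-1%g =
              ind_space tr f^-1%g (fun g => a g^-1%g).
  apply/funext => t; apply/propext/cotensor_spaceE => [//|//|c g|]; last by rewrite invg1.
  by rewrite (tcoef_rhoVd f a tr1 trM trmul).
rewrite indVE in rhod_dual *; rewrite indVdE; split.
- exact: stab_invg.
- exact: dual_ind_iso.
- exact: ind_iso_dual_iff.
Qed.
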